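(* Let $G$ be a graph and $v\in V(G)$ with $d_G(v)\le 2$. Then $\mathbf{a}_4(G)\ge \mathbf{a}_4(G-v)$.
   Context: Graphs are finite and simple. $\mathbf{a}_4(H)$ is the coefficient of $\lambda^{\nu(H)-4}$ in $\det(\lambda\mathbf{I}-\mathbf{A}(H))$, where $\nu(H)$ is the number of vertices; equivalently, $\mathbf{a}_4(H)$ is the number of 2-matchings of $H$ minus twice the number of 4-cycles of $H$. $G-v$ is the graph obtained by deleting $v$ and its incident edges. *)

From mathcomp Require Import all_boot all_order all_algebra.
Set Implicit Arguments. Unset Strict Implicit. Unset Printing Implicit Defensive.
Import GRing.Theory Num.Theory.
Local Open Scope ring_scope.

(* A finite simple graph is a symmetric irreflexive relation e on a finType T.
   For S : {set T}, [adjmx e S] is the adjacency matrix of the induced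
   subgraph G[S], with vertices indexed by enum_val : 'I_#|S| -> T. *)
Definition adjmx (T : finType) (e : rel T) (S : {set T}) : 'M[int]_#|S| :=
  \matrix_(i, j) (e (enum_val i) (enum_val j))%:R.

(* a_4(G[S]) = coefficient of lambda^(nu - 4) in det(lambda I - A(G[S])),
   nu = #|S|; it is 0 when nu < 4 (no such power). *)
Definition a4 (T : finType) (e : rel T) (S : {set T}) : int :=
  if (4 <= #|S|)%N then (char_poly (adjmx e S))`_(#|S| - 4) else 0.

Definition deg (T : finType) (e : rel T) (v : T) : nat := #|[set u | e v u]|.

From mathcomp Require Import all_boot all_order all_algebra all_fingroup zify.
Set Implicit Arguments. Unset Strict Implicit. Unset Printing Implicit Defensive.
Import GRing.Theory Num.Theory.

(* Expanding det(lambda I - A) over permutations, a_4(G[S]) is the signed number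
   of permutations of S that move exactly four vertices, each to a neighbour: a
   double transposition (a 2-matching) counts +1 and a 4-cycle (an oriented
   4-cycle of the graph) counts -1.  The terms of a_4(G) fixing v are exactly
   those of a_4(G - v).  A term moving v is either a 4-cycle v -> p -> x -> q -> v
   or a double transposition through v; sending the cycle to the 2-matching
   (v p)(x q) is injective, because p is read off the matching and q is then the
   only other neighbour of v, as deg v <= 2.  So the terms moving v add up to a
   nonnegative number. *)

Definition psupp (X : finType) (s : {perm X}) : {set X} := [set x | s x != x].

Ltac split_uniq U :=
  move: (U); rewrite /= !inE !negb_or -!andbA;
  repeat match goal with |- is_true (_ && _) -> _ => case/andP => ? end; move=> _.

Ltac decide_eq :=
  repeat (rewrite ?eqxx /=; match goal with
  | H : is_true (?x != ?y) |- context [?x == ?y] => rewrite (negbTE H)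
  | H : is_true (?x != ?y) |- context [?y == ?x] => rewrite (eq_sym y x) (negbTE H)
  end); rewrite ?eqxx /=.

Section FourPoints.
Variable X : finType.
Implicit Types (s t : {perm X}) (S : {set X}).

Lemma perm_onE S s : perm_on S s = (psupp s \subset S).
Proof. by rewrite /perm_on; apply: eq_subset => x; rewrite !inE. Qed.

Lemma perm_onS S1 S2 s : S1 \subset S2 -> perm_on S1 s -> perm_on S2 s.
Proof. by move=> sub12; rewrite !perm_onE => /subset_trans; apply. Qed.

Lemma perm_on_psupp s : perm_on (psupp s) s.
Proof. by rewrite perm_onE. Qed.

Lemma psupp_perm s x : (s x \in psupp s) = (x \in psupp s).
Proof. exact: perm_closed (perm_on_psupp s). Qed.

Lemma eq_perm_on S s t : perm_on S s -> perm_on S t -> {in S, s =1 t} -> s = t.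
Proof.
move=> sS tS eq_st; apply/permP => x.
by have [/eq_st // | xS] := boolP (x \in S); rewrite !(out_perm _ xS).
Qed.

Lemma exists_notin S (l : seq X) : size l < #|S| -> exists2 x, x \in S & x \notin l.
Proof.
move=> lt_l_S; apply/subsetPn; apply: contraTN lt_l_S => /subset_leq_card le_S_l.
by rewrite -leqNgt (leq_trans le_S_l (card_size l)).
Qed.

Lemma uniq_card_set_eq S (l : seq X) :
  uniq l -> #|S| = size l -> {subset l <= S} -> S =i l.
Proof.
move=> l_uniq card_S /subsetP l_S x.
by have /subset_cardP/(_ l_S) -> : #|l| = #|S| by rewrite (card_uniqP l_uniq).
Qed.

Lemma tpermE (x y z : X) :
  tperm x y z = if z == x then y else if z == y then x else z.
Proof.
by case: tpermP => [->|->|/eqP/negbTE-> /eqP/negbTE->]; rewrite ?eqxx //; case: eqP.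
Qed.

Lemma tperm2E (a b c d y : X) : uniq [:: a; b; c; d] ->
  (tperm a b * tperm c d)%g y =
  if y == a then b else if y == b then a else if y == c then d
  else if y == d then c else y.
Proof.
move=> U; split_uniq U; rewrite permM !tpermE.
have [_|ya] := eqVneq y a; decide_eq => //.
by have [_|yb] := eqVneq y b; decide_eq.
Qed.

Lemma psupp_tperm2 (a b c d : X) : uniq [:: a; b; c; d] ->
  psupp (tperm a b * tperm c d) =i [:: a; b; c; d].
Proof.
move=> U y; rewrite !inE tperm2E //; split_uniq U.
case: (y =P a) => [->|/eqP ya]; decide_eq => //.
case: (y =P b) => [->|/eqP yb]; decide_eq => //.
case: (y =P c) => [->|/eqP yc]; decide_eq => //.
by case: (y =P d) => [->|/eqP yd]; decide_eq.
Qed.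

Lemma perm4_involution s v : #|psupp s| = 4 -> v \in psupp s -> s (s v) = v ->
  exists2 a, uniq [:: v; s v; a; s a] & s = (tperm v (s v) * tperm a (s a))%g.
Proof.
move=> card_s v_s ssv.
have [a a_s] : exists2 a, a \in psupp s & a \notin [:: v; s v].
  by apply: exists_notin; rewrite card_s.
rewrite !inE negb_or => /andP[av asv].
have sv_v : s v != v by rewrite inE in v_s.
have sa_a : s a != a by rewrite inE in a_s.
have sa_v : s a != v by rewrite -ssv (inj_eq perm_inj).
have sa_sv : s a != s v by rewrite (inj_eq perm_inj).
have U : uniq [:: v; s v; a; s a] by rewrite /= !inE !negb_or; decide_eq.
have supp_s : psupp s =i [:: v; s v; a; s a].
  by apply: uniq_card_set_eq => //; apply/allP; rewrite /= !psupp_perm v_s a_s.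
have ssa : s (s a) = a.
  have : s (s a) \in psupp s by rewrite !psupp_perm.
  rewrite supp_s !inE -{1}ssv !(inj_eq (@perm_inj _ s)).
  by rewrite (negbTE av) (negbTE sa_v) (negbTE sa_a) orbF => /eqP.
exists a => //; apply: (@eq_perm_on (psupp s)); first exact: perm_on_psupp.
  by rewrite perm_onE; apply/subsetP => y; rewrite psupp_tperm2 // supp_s.
by move=> y; rewrite supp_s tperm2E // !inE => /or4P[] /eqP->; split_uniq U; decide_eq.
Qed.

Lemma perm4_cycle s v : #|psupp s| = 4 -> v \in psupp s -> s (s v) != v ->
  uniq [:: v; s v; s (s v); s (s (s v))] /\ s (s (s (s v))) = v.
Proof.
move=> card_s v_s ssv.
have sv_v : s v != v by rewrite inE in v_s.
have ssv_sv : s (s v) != s v by rewrite (inj_eq perm_inj).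
have sssv_ssv : s (s (s v)) != s (s v) by rewrite (inj_eq perm_inj).
have sssv_sv : s (s (s v)) != s v by rewrite (inj_eq perm_inj).
have sssv_v : s (s (s v)) != v.
  apply/eqP => sssv.
  have [y y_s] : exists2 y, y \in psupp s & y \notin [:: v; s v; s (s v)].
    by apply: exists_notin; rewrite card_s.
  rewrite !inE !negb_or => /and3P[yv ysv yssv].
  have U : uniq [:: v; s v; s (s v); y] by rewrite /= !inE !negb_or; decide_eq.
  have : s y \in [:: v; s v; s (s v); y].
    rewrite -(uniq_card_set_eq U card_s) ?psupp_perm //.
    by apply/allP; rewrite /= !psupp_perm v_s y_s.
  rewrite inE in y_s.
  rewrite !inE -{1}sssv !(inj_eq (@perm_inj _ s)).
  by rewrite (negbTE yv) (negbTE ysv) (negbTE yssv) (negbTE y_s).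
have U : uniq [:: v; s v; s (s v); s (s (s v))] by rewrite /= !inE !negb_or; decide_eq.
split=> //.
have : s (s (s (s v))) \in [:: v; s v; s (s v); s (s (s v))].
  rewrite -(uniq_card_set_eq U card_s) ?psupp_perm //.
  by apply/allP; rewrite /= !psupp_perm v_s.
rewrite !inE !(inj_eq (@perm_inj _ s)) (negbTE sssv_v) (negbTE ssv) (negbTE sv_v).
by rewrite !orbF => /eqP.
Qed.

Lemma perm4_cycleE s v : #|psupp s| = 4 -> v \in psupp s -> s (s v) != v ->
  s = (tperm v (s v) * tperm (s (s v)) (s (s (s v))) * tperm v (s (s v)))%g.
Proof.
move=> card_s v_s ssv; have [U s4v] := perm4_cycle card_s v_s ssv.
have supp_s : psupp s =i [:: v; s v; s (s v); s (s (s v))].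
  by apply: uniq_card_set_eq => //; apply/allP; rewrite /= !psupp_perm v_s.
apply: (@eq_perm_on (psupp s)); first exact: perm_on_psupp.
  apply: perm_onM.
    by rewrite perm_onE; apply/subsetP => y; rewrite psupp_tperm2 // supp_s.
  apply: perm_onS (tperm_on _ _).
  by apply/subsetP => y /set2P[]->; rewrite ?psupp_perm v_s.
move=> y; rewrite supp_s !inE => /or4P[]/eqP->; rewrite permM tperm2E // tpermE ?s4v;
  by split_uniq U; decide_eq.
Qed.

Lemma odd_perm4 s v : #|psupp s| = 4 -> v \in psupp s -> odd_perm s = (s (s v) != v).
Proof.
move=> card_s v_s; have [ssv|ssv] := eqVneq (s (s v)) v.
  have [a U ->] := perm4_involution card_s v_s ssv.
  by rewrite odd_permM !odd_tperm; split_uniq U; decide_eq.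
have [U _] := perm4_cycle card_s v_s ssv.
by rewrite {1}(perm4_cycleE card_s v_s ssv) !odd_permM !odd_tperm; split_uniq U; decide_eq.
Qed.

End FourPoints.

Local Open Scope ring_scope.

Section ExtendPerm.
Variables (T : finType) (S : {set T}) (x0 : T).
Hypothesis x0S : x0 \in S.
Local Notation n := #|S|.
Implicit Types (s t : 'S_n) (g : {perm T}).

Definition ext_perm_fun s (x : T) : T :=
  if x \in S then enum_val (s (enum_rank_in x0S x)) else x.

Lemma ext_perm_fun_inj s : injective (ext_perm_fun s).
Proof.
move=> x y; rewrite /ext_perm_fun.
case: (boolP (x \in S)) => xS; case: (boolP (y \in S)) => yS.
- by move/enum_val_inj/perm_inj/(congr1 enum_val); rewrite !enum_rankK_in.
- by move=> exy; move: yS; rewrite -exy enum_valP.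
- by move=> exy; move: xS; rewrite exy enum_valP.
- by [].
Qed.

Definition ext_perm s : {perm T} := perm (@ext_perm_fun_inj s).

Lemma ext_perm_enum_val s i : ext_perm s (enum_val i) = enum_val (s i).
Proof. by rewrite permE /ext_perm_fun enum_valP enum_valK_in. Qed.

Lemma ext_perm_out s x : x \notin S -> ext_perm s x = x.
Proof. by rewrite permE /ext_perm_fun => /negbTE->. Qed.

Lemma ext_perm_on s : perm_on S (ext_perm s).
Proof.
rewrite perm_onE; apply/subsetP => x; rewrite inE.
by apply: contraR => /(ext_perm_out s)->; rewrite eqxx.
Qed.

Lemma eq_ext_perm s g :
  perm_on S g -> (forall i, g (enum_val i) = enum_val (s i)) -> ext_perm s = g.
Proof.
move=> gS sg; apply: (eq_perm_on (ext_perm_on s) gS) => x xS.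
by rewrite -(enum_rankK_in x0S xS) ext_perm_enum_val sg.
Qed.

Lemma ext_perm_inj : injective ext_perm.
Proof.
move=> s t est; apply/permP => i; apply: enum_val_inj.
by rewrite -!ext_perm_enum_val est.
Qed.

Lemma ext_perm1 : ext_perm 1%g = 1%g.
Proof. by apply: eq_ext_perm (perm_on1 _) _ => i; rewrite !perm1. Qed.

Lemma ext_permM : {morph ext_perm : s t / (s * t)%g}.
Proof.
move=> s t; apply: eq_ext_perm; first by rewrite perm_onM ?ext_perm_on.
by move=> i; rewrite !permM !ext_perm_enum_val.
Qed.

Lemma ext_tperm i j : ext_perm (tperm i j) = tperm (enum_val i) (enum_val j).
Proof.
apply: eq_ext_perm => [|k]; last by rewrite (inj_tperm _ _ _ enum_val_inj).
by apply: perm_onS (tperm_on _ _); apply/subsetP => x /set2P[]->; rewrite enum_valP.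
Qed.

Lemma odd_ext_perm s : odd_perm (ext_perm s) = odd_perm s.
Proof.
have [ts -> _] := prod_tpermP s; elim: ts => [|t ts IHts].
  by rewrite !big_nil ext_perm1 !odd_perm1.
by rewrite !big_cons ext_permM !odd_permM IHts ext_tperm !odd_tperm (inj_eq enum_val_inj).
Qed.

Lemma psupp_ext_perm s : psupp (ext_perm s) = enum_val @: psupp s.
Proof.
apply/setP => x; rewrite inE; have [xS | xNS] := boolP (x \in S).
  rewrite -(enum_rankK_in x0S xS) ext_perm_enum_val (inj_eq enum_val_inj).
  by rewrite (mem_imset _ _ enum_val_inj) inE.
rewrite ext_perm_out // eqxx; apply/esym/imsetP => -[i _ xi].
by move: xNS; rewrite xi enum_valP.
Qed.

Lemma card_psupp_ext_perm s : #|psupp (ext_perm s)| = #|psupp s|.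
Proof. by rewrite psupp_ext_perm card_imset //; apply: enum_val_inj. Qed.

Lemma ext_perm_onto g : perm_on S g -> {s | ext_perm s = g}.
Proof.
move=> gS; pose f (i : 'I_n) := enum_rank_in x0S (g (enum_val i)).
have gS' (i : 'I_n) : g (enum_val i) \in S by rewrite (perm_closed _ gS) enum_valP.
have f_inj : injective f.
  move=> i j /(congr1 enum_val); rewrite /f !enum_rankK_in //.
  by move/perm_inj/enum_val_inj.
by exists (perm f_inj); apply: eq_ext_perm => // i; rewrite permE enum_rankK_in.
Qed.

Lemma sum_ext_perm (V : nmodType) k (F : {perm T} -> V) :
  \sum_(s | #|psupp s| == k) F (ext_perm s) =
  \sum_(g | perm_on S g && (#|psupp g| == k)) F g.
Proof.
transitivity (\sum_(g in ext_perm @: [set s | #|psupp s| == k]) F g).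
  rewrite big_imset /=; last by move=> s t _ _; apply: ext_perm_inj.
  by apply: eq_bigl => s; rewrite inE.
apply: eq_bigl => g; apply/imsetP/andP => [[s] | [gS card_g]].
  by rewrite inE => card_s ->; rewrite ext_perm_on card_psupp_ext_perm.
have [s sg] := ext_perm_onto gS.
by exists s; rewrite // inE -card_psupp_ext_perm sg.
Qed.

End ExtendPerm.

Lemma char_poly_coef_zero_diag (R : comNzRingType) n k (M : 'M[R]_n) :
  (forall i, M i i = 0) -> (k <= n)%N ->
  (char_poly M)`_(n - k) =
  (-1) ^+ k * \sum_(s : 'S_n | #|psupp s| == k) (-1) ^+ s * \prod_(i in psupp s) M i (s i).
Proof.
move=> M0 le_k_n; rewrite /char_poly /determinant coef_sum mulr_sumr [RHS]big_mkcond /=.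
apply: eq_bigr => s _; rewrite -(rmorph_sign polyC) coefCM.
have card_fix : #|[pred i | s i == i]| = (n - #|psupp s|)%N.
  have := cardC (psupp s); rewrite card_ord.
  suff -> : #|[pred i | s i == i]| = #|[predC psupp s]| by lia.
  by apply: eq_card => i; rewrite !inE negbK.
have -> : \prod_i (char_poly_mx M) i (s i) =
    'X^(n - #|psupp s|) * (\prod_(i in psupp s) - M i (s i))%:P.
  rewrite (bigID (fun i => s i == i)) /= rmorph_prod -card_fix -prodr_const; congr (_ * _).
    by apply: eq_bigr => i /eqP si; rewrite !mxE si eqxx M0 subr0.
  apply: eq_big => [i | i si]; first by rewrite inE.
  by rewrite !mxE eq_sym (negbTE si) sub0r rmorphN.
rewrite coefXnM coefC prodrN; have [<- | ne_k] := eqVneq #|psupp s| k.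
  by rewrite ltnn subnn mulrCA.
have := max_card (psupp s); rewrite card_ord => le_supp_n.
by case: ltnP => [_ | le_nk]; rewrite ?mulr0 // ifN ?mulr0 //; lia.
Qed.

Lemma prod_nat_pred (R : comPzSemiRingType) (X : finType) (A : {pred X}) (P : pred X) :
  \prod_(x in A) (P x)%:R = [forall x in A, P x]%:R :> R.
Proof.
have [/forall_inP allP | /forall_inPn[x xA NPx]] := boolP [forall x in A, P x].
  by rewrite big1 // => x /allP->.
by rewrite (bigD1 x xA) /= (negbTE NPx) mul0r.
Qed.

Section PermutationExpansion.
Variables (T : finType) (e : rel T).

Definition edge_perm (g : {perm T}) := [forall x in psupp g, e x (g x)].

Definition a4_perms (S : {set T}) : {set {perm T}} :=
  [set g | [&& psupp g \subset S, #|psupp g| == 4%N & edge_perm g]].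

Lemma a4_permsP (S : {set T}) g :
  reflect [/\ psupp g \subset S, #|psupp g| = 4%N & edge_perm g] (g \in a4_perms S).
Proof.
by rewrite inE; apply: (iffP and3P) => -[gS /eqP card_g g_edge]; split=> //; apply/eqP.
Qed.

Hypothesis e_irr : irreflexive e.

Lemma a4_perm_sum S : a4 e S = \sum_(g in a4_perms S) (-1) ^+ g.
Proof.
rewrite /a4; have [le4S | ltS4] := leqP 4 #|S|; last first.
  rewrite big_pred0 // => g; rewrite inE; apply/negbTE.
  apply: contraTN ltS4 => /and3P[/subset_leq_card le_gS /eqP card_g _].
  by rewrite -leqNgt -card_g.
have [x0 x0S] : exists x0, x0 \in S by apply/set0Pn; rewrite -card_gt0 (leq_trans _ le4S).
rewrite char_poly_coef_zero_diag //; last by move=> i; rewrite mxE e_irr.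
rewrite -signr_odd expr0 mul1r.
have -> : \sum_(g in a4_perms S) (-1) ^+ g =
    \sum_(g | perm_on S g && (#|psupp g| == 4%N)) (-1) ^+ g * (edge_perm g)%:R :> int.
  rewrite big_mkcond [RHS]big_mkcond; apply: eq_bigr => g _; rewrite inE perm_onE.
  by case: edge_perm; rewrite ?andbT ?andbF ?mulr1 ?mulr0 ?if_same.
rewrite -(sum_ext_perm x0S); apply: eq_bigr => s _; rewrite odd_ext_perm.
rewrite /edge_perm -prod_nat_pred psupp_ext_perm big_imset /=; last first.
  by move=> i j _ _; apply: enum_val_inj.
by congr (_ * _); apply: eq_bigr => i _; rewrite mxE ext_perm_enum_val.
Qed.

End PermutationExpansion.

Section DegreeAtMostTwo.
Variables (T : finType) (e : rel T).
Hypothesis e_sym : symmetric e.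
Variable v : T.
Hypothesis deg_v : (deg e v <= 2)%N.

Lemma neighbour_deg_le2 a b c : e v a -> e v b -> e v c -> a != b -> c != a -> c = b.
Proof.
move=> va vb vc ab ca; apply/eqP; apply: contraTT deg_v => cb.
have U : uniq [:: a; b; c] by rewrite /= !inE !negb_or ab eq_sym ca eq_sym cb.
suff : (#|[:: a; b; c]| <= deg e v)%N by rewrite (card_uniqP U) -ltnNge.
by apply/subset_leq_card/subsetP => x; rewrite !inE => /or3P[] /eqP->.
Qed.

Definition matching_of_cycle (g : {perm T}) : {perm T} :=
  (tperm v (g v) * tperm (g (g v)) (g (g (g v))))%g.

Definition cycles_at_v : {pred {perm T}} :=
  [pred g | [&& g \in a4_perms e setT, v \in psupp g & g (g v) != v]].

Definition matchings_at_v : {pred {perm T}} :=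
  [pred g | [&& g \in a4_perms e setT, v \in psupp g & g (g v) == v]].

Lemma cycles_at_v_edges g : g \in cycles_at_v ->
  [/\ uniq [:: v; g v; g (g v); g (g (g v))], e v (g v), e v (g (g (g v)))
    & e (g (g v)) (g (g (g v)))].
Proof.
move=> /and3P[/a4_permsP[_ card_g /forall_inP g_edge] v_g ssv].
have [U s4v] := perm4_cycle card_g v_g ssv.
split=> //; first exact: g_edge.
  by rewrite e_sym -{2}s4v; apply: g_edge; rewrite !psupp_perm.
by apply: g_edge; rewrite !psupp_perm.
Qed.

Lemma matching_of_cycleP g : g \in cycles_at_v -> matching_of_cycle g \in matchings_at_v.
Proof.
move=> g_cyc; have [U ev1 _ e23] := cycles_at_v_edges g_cyc.
have supp_m := psupp_tperm2 U.
rewrite /matching_of_cycle !inE subsetT (eq_card supp_m) (card_uniqP U) !tperm2E //.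
split_uniq U; decide_eq; rewrite andbT.
apply/forall_inP => x; rewrite supp_m !inE => /or4P[] /eqP->;
  by rewrite tperm2E //; decide_eq; rewrite // e_sym.
Qed.

Lemma matching_of_cycle_inj : {in cycles_at_v &, injective matching_of_cycle}.
Proof.
move=> g1 g2 g1_cyc g2_cyc eq_m.
have [U1 e11 e13 _] := cycles_at_v_edges g1_cyc.
have [U2 _ e23 _] := cycles_at_v_edges g2_cyc.
have m_at x : matching_of_cycle g1 x = matching_of_cycle g2 x by rewrite eq_m.
have eq1 : g1 v = g2 v by have := m_at v; rewrite !tperm2E //; decide_eq.
have eq3 : g2 (g2 (g2 v)) = g1 (g1 (g1 v)).
  split_uniq U1; split_uniq U2.
  by apply: neighbour_deg_le2 e11 e13 e23 _ _; rewrite // eq1 eq_sym.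
have eq2 : g1 (g1 v) = g2 (g2 v).
  have := m_at (g1 (g1 (g1 v))); rewrite -{2}eq3 !tperm2E //.
  by split_uniq U1; split_uniq U2; decide_eq.
move: g1_cyc g2_cyc => /and3P[/a4_permsP[_ c1 _] v1 s1] /and3P[/a4_permsP[_ c2 _] v2 s2].
by rewrite (perm4_cycleE c1 v1 s1) [RHS](perm4_cycleE c2 v2 s2) -eq3 eq2 eq1.
Qed.

Lemma sum_a4_perms_at_v_ge0 :
  0 <= \sum_(g in a4_perms e setT | v \in psupp g) (-1) ^+ g :> int.
Proof.
have sign g : g \in a4_perms e setT -> v \in psupp g ->
    (-1) ^+ g = if g (g v) != v then -1 else 1 :> int.
  by move=> /a4_permsP[_ card_g _] v_g; rewrite (odd_perm4 card_g v_g); case: ifP.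
rewrite (bigID (fun g : {perm T} => g (g v) != v)) /=.
rewrite (eq_bigr (fun=> -1)) => [|g /andP[/andP[g_a4 v_g] ssv]]; last first.
  by rewrite sign // ssv.
rewrite [X in _ + X](eq_bigr (fun=> 1)) => [|g /andP[/andP[g_a4 v_g] ssv]]; last first.
  by rewrite sign // (negbTE ssv).
rewrite !sumr_const addrC mulNrn subr_ge0 ler_nat.
rewrite (@eq_card _ _ cycles_at_v) => [|g]; last by rewrite unfold_in /= -andbA.
rewrite [X in (_ <= X)%N](@eq_card _ _ matchings_at_v) => [|g]; last first.
  by rewrite unfold_in /= -andbA negbK.
rewrite -(card_in_imset matching_of_cycle_inj); apply/subset_leq_card/subsetP.
by move=> _ /imsetP[g g_cyc ->]; apply: matching_of_cycleP.
Qed.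

End DegreeAtMostTwo.

Theorem theorem4p3 (T : finType) (e : rel T) (e_sym : symmetric e)
  (e_irr : irreflexive e) (v : T) (hv : (deg e v <= 2)%N) :
  a4 e ([set: T] :\ v) <= a4 e [set: T].
Proof.
rewrite !(a4_perm_sum e_irr) [X in _ <= X](bigID (fun g : {perm T} => v \in psupp g)) /=.
have -> : \sum_(g in a4_perms e ([set: T] :\ v)) (-1) ^+ g =
    \sum_(g in a4_perms e [set: T] | v \notin psupp g) (-1) ^+ g :> int.
  apply: eq_bigl => g; rewrite !inE subsetD1 !inE.
  by case: (g v != v); rewrite ?andbT ?andbF.
by rewrite lerDr (sum_a4_perms_at_v_ge0 e_sym hv).
Qed.
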